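(* Let $V$ be a finite-dimensional vector space over an algebraically closed field $k$, let $G = \mathrm{GL}(V)$, and let $H$ and $K$ be subgroups of $G$, with $K$ reductive, which both preserve a direct-sum decomposition $V = \bigoplus_{i=1}^n V_i$. Suppose also that $K = K_1 \times \cdots \times K_n$ where $K_i \le \mathrm{GL}(V_i)$ for each $i$ (with $K_i$ regarded as a subgroup of $G$ acting trivially on $V_j$ for $j\neq i$). Then $H$ is relatively $G$-completely reducible with respect to $K$ if and only if $H$ is relatively $G$-completely reducible with respect to $K_i$ for all $i$.
   Context: For a cocharacter $\lambda$ of $G$, $P_\lambda = \{g \in G \mid \lim_{a\to 0}\lambda(a)g\lambda(a)^{-1} \text{ exists}\}$ and $L_\lambda = \{g \in G \mid \lim_{a\to 0}\lambda(a)g\lambda(a)^{-1} = g\}$. For a reductive subgroup $M$ of $G$, $H$ is relatively $G$-completely reducible with respect to $M$ if for every cocharacter $\lambda$ of $M$ with $H \subseteq P_\lambda$ there is a cocharacter $\mu$ of $M$ with $P_\lambda = P_\mu$ and $H \subseteq L_\mu$. *)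

(* Linear algebraic groups inside GL_N(k), k algebraically
   closed, V = k^N as row vectors (g acts by v |-> v *m g). *)
From HB Require Import structures.
From mathcomp Require Import all_boot all_order all_algebra all_field.
From mathcomp Require Import mpoly.
Set Implicit Arguments. Unset Strict Implicit. Unset Printing Implicit Defensive.
Import GRing.Theory.
Local Open Scope ring_scope.

Section AlgGroups.
Variables (k : closedFieldType) (N : nat).

Definition mxset := 'M[k]_N -> Prop.

Definition subgroup (H : mxset) : Prop :=
  [/\ forall g, H g -> g \in unitmx,
      H 1%:M,
      forall g h, H g -> H h -> H (g *m h)
    & forall g, H g -> H (invmx g)].

Definition mxcoords (g : 'M[k]_N) : 'I_(N * N) -> k := fun i => mxvec g 0 i.

(* Zariski-closed subset of GL_N(k): intersection of GL_N with the zero set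
   of a family of polynomials in the matrix entries *)
Definition zclosed (A : mxset) : Prop :=
  exists S : {mpoly k[N * N]} -> Prop,
    forall g, A g <-> (g \in unitmx /\ forall p, S p -> p.@[mxcoords g] = 0).

Definition zconnected (A : mxset) : Prop :=
  forall C1 C2 : mxset, zclosed C1 -> zclosed C2 ->
    (forall g, A g -> C1 g \/ C2 g) ->
    (forall g, A g -> C1 g -> C2 g -> False) ->
    (forall g, A g -> C1 g) \/ (forall g, A g -> C2 g).

Definition unipotent (g : 'M[k]_N) : Prop :=
  exists m : nat, iter m (mulmx (g - 1%:M)) 1%:M = 0.

Definition normal_in (U M : mxset) : Prop :=
  forall m u, M m -> U u -> U (invmx m *m u *m m).

(* reductive subgroup: closed subgroup whose unipotent radical is trivial,
   i.e. every closed connected normal unipotent subgroup is trivial *)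
Definition reductive (M : mxset) : Prop :=
  [/\ subgroup M, zclosed M &
      forall U : mxset, subgroup U -> (forall u, U u -> M u) -> zclosed U ->
        zconnected U -> normal_in U M -> (forall u, U u -> unipotent u) ->
        forall u, U u -> u = 1%:M].

Definition evalmx (Q : 'M[{poly k}]_N) (a : k) : 'M[k]_N :=
  map_mx (fun p => p.[a]) Q.

(* cocharacter G_m -> GL_N: a homomorphism k^x -> GL_N(k) that is a morphism
   of varieties (entries are Laurent polynomials in a) *)
Definition cocharacter (lam : k -> 'M[k]_N) : Prop :=
  [/\ exists (e : nat) (P : 'M[{poly k}]_N),
        forall a, a != 0 -> lam a = (a ^+ e)^-1 *: evalmx P a,
      forall a, a != 0 -> lam a \in unitmx
    & forall a b, a != 0 -> b != 0 -> lam (a * b) = lam a *m lam b].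

Definition cocharacter_of (M : mxset) (lam : k -> 'M[k]_N) : Prop :=
  cocharacter lam /\ forall a, a != 0 -> M (lam a).

(* lim_{a -> 0} lam(a) g lam(a)^-1 exists and equals L: the morphism
   a |-> lam(a) g lam(a)^-1 on G_m extends to a morphism A^1 -> GL_N
   whose value at 0 is L *)
Definition limit_is (lam : k -> 'M[k]_N) (g L : 'M[k]_N) : Prop :=
  exists Q : 'M[{poly k}]_N,
    [/\ forall a, a != 0 -> lam a *m g *m invmx (lam a) = evalmx Q a,
        L = evalmx Q 0 & L \in unitmx].

Definition Pl (lam : k -> 'M[k]_N) : mxset :=
  fun g => g \in unitmx /\ exists L, limit_is lam g L.

Definition Ll (lam : k -> 'M[k]_N) : mxset :=
  fun g => g \in unitmx /\ limit_is lam g g.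

Definition rel_Gcr (H M : mxset) : Prop :=
  forall lam, cocharacter_of M lam -> (forall h, H h -> Pl lam h) ->
    exists mu, [/\ cocharacter_of M mu, (forall g, Pl lam g <-> Pl mu g)
                 & forall h, H h -> Ll mu h].

End AlgGroups.

From HB Require Import structures.
From mathcomp Require Import all_boot all_order all_algebra all_field.
From mathcomp Require Import mpoly.
From mathcomp Require Import zify.
Set Implicit Arguments. Unset Strict Implicit. Unset Printing Implicit Defensive.
Import GRing.Theory.
Local Open Scope ring_scope.

(* A cocharacter [lam] of GL_N is the same as a weight decomposition
   [lam a = a^-e (E_0 + a E_1 + ... + a^(D-1) E_(D-1))] with [E_d] a complete
   family of orthogonal idempotents; then [P_lam] consists of the units that are
   block lower triangular for the [E_d], and [L_lam] of the block diagonal ones.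
   If [lam] takes values in [P_mu], the block diagonal part [nu] of [lam] for the
   weight decomposition of [mu] is again a cocharacter: it is conjugate to [lam]
   by an element of [P_mu], it commutes with [mu], and since
   [nu a = lim_(b -> 0) mu b lam a mu b^-1] it stays in every closed subgroup
   containing [lam] and [mu]. Moreover, when [nu] commutes with [mu] and
   [P_mu <= P_nu], also [L_mu <= L_nu].
   For [K = K_1 x ... x K_n] acting blockwise, a cocharacter of [K] is a tuple
   of cocharacters of the [K_i], and on block diagonal elements [P_lam] and
   [L_lam] are computed block by block. In both directions of the equivalence,
   the cocharacter [mu] given by the hypothesis is replaced by this projection
   [nu] of [lam], which has the same parabolic as [lam] and whose Levi subgroup
   contains that of [mu]. *)

Section PolynomialCurves.
Variables (k : closedFieldType) (N : nat).
Implicit Types (A : 'M[k]_N) (Q : 'M[{poly k}]_N).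

(* [p * 'X + 1] has no root, hence is constant since [k] is algebraically closed. *)
Lemma poly_eq0_on_nonzero (p : {poly k}) :
  (forall a : k, a != 0 -> p.[a] = 0) -> p = 0.
Proof.
move=> p0; have pX0 a : (p * 'X).[a] = 0.
  by rewrite hornerM hornerX; have [->|/p0 ->] := eqVneq a 0; rewrite ?mulr0 ?mul0r.
have size_pX1 : size (p * 'X + 1) == 1%N.
  apply: contraT => /closed_rootP [x]; rewrite /root hornerD pX0 hornerC add0r.
  by rewrite oner_eq0.
have /size1_polyC pX1C : (size (p * 'X + 1)%R <= 1)%N by rewrite (eqP size_pX1).
apply/polyP => i; rewrite coef0; have := congr1 (fun q : {poly k} => q`_i.+1) pX1C.
by rewrite /= coefD coefMX !coefC /= addr0.
Qed.

Lemma mx_coef_eq0_on_nonzero D (C : nat -> 'M[k]_N) :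
  (forall a, a != 0 -> \sum_(d < D) a ^+ d *: C d = 0) ->
  forall d, (d < D)%N -> C d = 0.
Proof.
move=> C0 d ltdD; apply/matrixP => i j; rewrite mxE.
suff /(congr1 (fun q : {poly k} => q`_d)) : \poly_(d < D) (C d i j) = 0.
  by rewrite coef_poly ltdD coef0.
apply: poly_eq0_on_nonzero => a /C0 /matrixP /(_ i j) Ca0.
rewrite mxE summxE in Ca0; rewrite horner_poly; apply: etrans Ca0.
by apply: eq_bigr => x _; rewrite !mxE mulrC.
Qed.

Lemma coefXnMC (c : k) m t : ('X^m * c%:P)`_t = if t == m then c else 0.
Proof.
rewrite coefXnM coefC; case: ltngtP => [//|mt|->]; last by rewrite subnn.
by rewrite subn_eq0 leqNgt mt.
Qed.

Definition polyC_mx A : 'M[{poly k}]_N := map_mx polyC A.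

Lemma evalmxE Q a : evalmx Q a = map_mx (horner_eval a) Q.
Proof. by []. Qed.

Lemma evalmx_polyC A a : evalmx (polyC_mx A) a = A.
Proof. by apply/matrixP => i j; rewrite !mxE hornerC. Qed.

Lemma evalmx_entry Q a i j : evalmx Q a i j = (Q i j).[a].
Proof. by rewrite mxE. Qed.

Lemma evalmx0 a : evalmx (0 : 'M[{poly k}]_N) a = 0.
Proof. by rewrite evalmxE map_mx0. Qed.

Lemma evalmxM Q1 Q2 a : evalmx (Q1 *m Q2) a = evalmx Q1 a *m evalmx Q2 a.
Proof. by rewrite !evalmxE map_mxM. Qed.

Lemma evalmxD Q1 Q2 a : evalmx (Q1 + Q2) a = evalmx Q1 a + evalmx Q2 a.
Proof. by rewrite !evalmxE map_mxD. Qed.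

Lemma evalmxZ (p : {poly k}) Q a : evalmx (p *: Q) a = p.[a] *: evalmx Q a.
Proof. by rewrite !evalmxE map_mxZ. Qed.

Lemma evalmx_sum (I : Type) (r : seq I) (P : pred I) (F : I -> 'M[{poly k}]_N) a :
  evalmx (\sum_(i <- r | P i) F i) a = \sum_(i <- r | P i) evalmx (F i) a.
Proof. by rewrite !evalmxE raddf_sum. Qed.

Lemma det_evalmx Q a : \det (evalmx Q a) = (\det Q).[a].
Proof. by rewrite evalmxE det_map_mx. Qed.

End PolynomialCurves.

Section WeightDecomposition.
Variables (k : closedFieldType) (N : nat).
Implicit Types (A : 'M[k]_N) (lam : k -> 'M[k]_N).

Lemma sum_ord_delta D d (F : nat -> 'M[k]_N) : (d < D)%N ->
  \sum_(d' < D) (if d == d' then F d' else 0) = F d.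
Proof.
by move=> ltdD; rewrite -big_mkcond (eq_bigl _ _ (fun d' => eq_sym _ _)) big_ord1_eq ltdD.
Qed.

(* [lam a = a^-e (E 0 + a E 1 + ... + a^(D-1) E (D-1))]: [E d] projects onto the
   weight space of weight [d - e]. *)
Definition weight_decomp (e D : nat) (E : nat -> 'M[k]_N) lam :=
  [/\ forall d d', (d < D)%N -> (d' < D)%N -> E d *m E d' = if d == d' then E d else 0,
      \sum_(d < D) E d = 1%:M
    & forall a, a != 0 -> lam a = (a ^+ e)^-1 *: \sum_(d < D) a ^+ d *: E d].

Lemma orthogonal_of_mx_poly_mul D (E : nat -> 'M[k]_N) :
  (forall a b, a != 0 -> b != 0 -> \sum_(d < D) (a * b) ^+ d *: E d =
     (\sum_(d < D) a ^+ d *: E d) *m \sum_(d < D) b ^+ d *: E d) ->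
  forall d d', (d < D)%N -> (d' < D)%N -> E d *m E d' = if d == d' then E d else 0.
Proof.
move=> Wmul.
have EdW b d : b != 0 -> (d < D)%N -> b ^+ d *: E d = E d *m \sum_(d < D) b ^+ d *: E d.
  move=> b0 ltdD; apply/eqP; rewrite -subr_eq0; apply/eqP; move: d ltdD.
  apply: (mx_coef_eq0_on_nonzero (C := fun d => b ^+ d *: E d - E d *m _)) => a a0.
  rewrite -[RHS](subrr (\sum_(d < D) a ^+ d *: E d *m \sum_(d < D) b ^+ d *: E d)).
  rewrite -{1}mulmx_suml -Wmul // -sumrB; apply: eq_bigr => d _.
  by rewrite exprMn scalerBr scalerA scalemxAl.
move=> d d' ltdD ltd'D; apply/eqP; rewrite eq_sym -subr_eq0; apply/eqP; move: d' ltd'D.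
apply: (mx_coef_eq0_on_nonzero (C := fun d' => (if d == d' then E d else 0) - E d *m E d')).
move=> b b0; rewrite -[RHS](subrr (b ^+ d *: E d)) {2}EdW // mulmx_sumr.
rewrite -{1}(sum_ord_delta (fun d' => b ^+ d' *: E d) ltdD) -sumrB; apply: eq_bigr => d' _.
by rewrite scalerBr -scalemxAr; case: eqP => //; rewrite scaler0.
Qed.

Lemma unitmx_idem_eq1 A : A \in unitmx -> A *m A = A -> A = 1%:M.
Proof. by move=> Au AA; rewrite -[A]mul1mx -(mulVmx Au) -mulmxA AA. Qed.

Lemma cocharacter_weight_decomp lam :
  cocharacter lam -> exists e D E, weight_decomp e D E lam.
Proof.
case=> [[e [P lamP]] lam_unit lamM].
pose D := (\max_(ij : 'I_N * 'I_N) size (P ij.1 ij.2))%N.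
pose E d := \matrix_(i, j) (P i j)`_d.
have PE a : evalmx P a = \sum_(d < D) a ^+ d *: E d.
  apply/matrixP => i j; rewrite !mxE summxE.
  have := leq_bigmax (F := fun ij : 'I_N * 'I_N => size (P ij.1 ij.2)) (i, j).
  move=> /(horner_coef_wide a) ->.
  by apply: eq_bigr => d _; rewrite !mxE mulrC.
have PM a b : a != 0 -> b != 0 -> evalmx P (a * b) = evalmx P a *m evalmx P b.
  move=> a0 b0; have := lamM a b a0 b0.
  rewrite !lamP ?mulf_neq0 // -scalemxAl -scalemxAr scalerA exprMn invfM => PMab.
  by apply: scalerI PMab; rewrite mulf_neq0 // invr_eq0 expf_neq0.
have lam1 : lam 1 = 1%:M.
  by apply: unitmx_idem_eq1; rewrite ?lam_unit -?lamM ?mulr1 ?oner_neq0.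
exists e, D, E; split.
- by apply: orthogonal_of_mx_poly_mul => a b a0 b0; rewrite -!PE PM.
- rewrite -lam1 lamP ?oner_neq0 // expr1n invr1 scale1r PE.
  by apply: eq_bigr => d _; rewrite expr1n scale1r.
- by move=> a a0; rewrite lamP // PE.
Qed.

End WeightDecomposition.

Section ConjugationCurves.
Variables (k : closedFieldType) (N : nat).
Implicit Types (A B g h u : 'M[k]_N) (Q : 'M[{poly k}]_N) (lam : k -> 'M[k]_N).

Lemma mulmx1_invmx A B : A *m B = 1%:M -> invmx A = B.
Proof.
move=> AB1; have [Au _] := mulmx1_unit AB1.
by rewrite -[invmx A]mulmx1 -AB1 mulmxA mulVmx // mul1mx.
Qed.

Lemma invmxM A B : A \in unitmx -> B \in unitmx -> invmx (A *m B) = invmx B *m invmx A.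
Proof.
by move=> Au Bu; apply: mulmx1_invmx; rewrite mulmxA -(mulmxA A) mulmxV // mulmx1 mulmxV.
Qed.

Lemma conjmxM u A B : u \in unitmx ->
  (u *m A *m invmx u) *m (u *m B *m invmx u) = u *m (A *m B) *m invmx u.
Proof. by move=> uu; rewrite !mulmxA mulmxKV. Qed.

Definition conj_curve lam g Q :=
  forall a, a != 0 -> lam a *m g *m invmx (lam a) = evalmx Q a.

Variable lam : k -> 'M[k]_N.
Hypothesis lam_unit : forall a, a != 0 -> lam a \in unitmx.

Lemma det_conj_curve g Q a : conj_curve lam g Q -> a != 0 -> \det (evalmx Q a) = \det g.
Proof.
move=> gQ a0; rewrite -gQ // !det_mulmx det_inv mulrC mulrA mulVf ?mul1r //.
by rewrite -unitfE -unitmxE lam_unit.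
Qed.

Lemma det_conj_curve0 g Q : conj_curve lam g Q -> \det (evalmx Q 0) = \det g.
Proof.
move=> gQ; have : \det Q - (\det g)%:P = 0.
  apply: poly_eq0_on_nonzero => a a0.
  by rewrite hornerD hornerN hornerC -det_evalmx (det_conj_curve gQ a0) subrr.
move/(congr1 (horner^~ 0)); rewrite hornerD hornerN hornerC horner0 det_evalmx.
by move/eqP; rewrite subr_eq0 => /eqP.
Qed.

Lemma Pl_curveE g : Pl lam g <-> g \in unitmx /\ exists Q, conj_curve lam g Q.
Proof.
split=> [[gu [L [Q [gQ _ _]]]]|[gu [Q gQ]]]; first by split => //; exists Q.
split => //; exists (evalmx Q 0), Q; split => //.
by rewrite unitmxE (det_conj_curve0 gQ) -unitmxE.
Qed.

Lemma Ll_curveE g :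
  Ll lam g <-> g \in unitmx /\ exists Q, conj_curve lam g Q /\ evalmx Q 0 = g.
Proof.
split=> [[gu [Q [gQ Q0 _]]]|[gu [Q [gQ Q0]]]]; first by split => //; exists Q.
by split => //; exists Q; split; rewrite ?Q0.
Qed.

Lemma Pl_mul g h : Pl lam g -> Pl lam h -> Pl lam (g *m h).
Proof.
move=> /Pl_curveE [gu [Q1 gQ1]] /Pl_curveE [hu [Q2 hQ2]].
apply/Pl_curveE; split; first by rewrite unitmx_mul gu hu.
by exists (Q1 *m Q2) => a a0; rewrite -conjmxM ?lam_unit // gQ1 // hQ2 // evalmxM.
Qed.

(* The inverse of a polynomial curve of constant determinant [det g] is the
   polynomial curve [adj Q / det g]. *)
Lemma Pl_inv g : Pl lam g -> Pl lam (invmx g).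
Proof.
move=> /Pl_curveE [gu [Q gQ]]; apply/Pl_curveE; split; first by rewrite unitmx_inv.
exists (((\det g)^-1)%:P *: \adj Q) => a a0.
have Qa_det := det_conj_curve gQ a0.
have Qau : evalmx Q a \in unitmx by rewrite unitmxE Qa_det -unitmxE.
have -> : lam a *m invmx g *m invmx (lam a) = invmx (evalmx Q a).
  have lau := lam_unit a0.
  rewrite -gQ // invmxM ?unitmx_mul ?lau ?gu ?unitmx_inv // invmxM //.
  by rewrite invmxK mulmxA.
by rewrite evalmxZ hornerC /invmx Qau Qa_det !evalmxE map_mx_adj.
Qed.

Lemma Pl_conj u g : Pl lam u -> Pl lam g -> Pl lam (invmx u *m g *m u).
Proof. by move=> Pu Pg; do 2!apply: Pl_mul => //; apply: Pl_inv. Qed.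

End ConjugationCurves.

Section ParabolicConjugation.
Variables (k : closedFieldType) (N : nat).
Implicit Types (g u : 'M[k]_N) (lam : k -> 'M[k]_N).

Lemma Pl_conjmx lam u g : (forall a, a != 0 -> lam a \in unitmx) ->
  u \in unitmx -> Pl lam g ->
  Pl (fun a => u *m lam a *m invmx u) (u *m g *m invmx u).
Proof.
move=> lam_unit uu /(Pl_curveE lam_unit) [gu [Q gQ]].
have conj_unit a : a != 0 -> u *m lam a *m invmx u \in unitmx.
  by move=> a0; rewrite !unitmx_mul unitmx_inv uu lam_unit.
apply/(Pl_curveE conj_unit).
split; first by rewrite !unitmx_mul unitmx_inv uu gu.
exists (polyC_mx u *m Q *m polyC_mx (invmx u)) => a a0 /=.
have -> : invmx (u *m lam a *m invmx u) = u *m invmx (lam a) *m invmx u.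
  by apply: mulmx1_invmx; rewrite conjmxM // mulmxV ?lam_unit // mulmx1 mulmxV.
by rewrite !conjmxM // gQ // !evalmxM !evalmx_polyC.
Qed.

Lemma Pl_ext lam lam' g : (forall a, a != 0 -> lam a = lam' a) -> Pl lam g -> Pl lam' g.
Proof.
move=> eq_lam [gu [L [Q [gQ QL Lu]]]]; split => //; exists L, Q; split => //.
by move=> a a0; rewrite -eq_lam // gQ.
Qed.

(* [P_(u lam u^-1) = u P_lam u^-1 = P_lam] for [u] in [P_lam]. *)
Lemma Pl_conj_cochar lam nu u :
  (forall a, a != 0 -> lam a \in unitmx) -> Pl lam u ->
  (forall a, a != 0 -> nu a = u *m lam a *m invmx u) ->
  forall g, Pl lam g <-> Pl nu g.
Proof.
move=> lam_unit Pu nuE; have [uu _] := Pu.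
have nu_unit a : a != 0 -> nu a \in unitmx.
  by move=> a0; rewrite nuE // !unitmx_mul unitmx_inv uu lam_unit.
move=> g; split=> Pg.
  apply: Pl_ext (fun a a0 => esym (nuE a a0)) _.
  have := Pl_conjmx lam_unit uu (Pl_conj lam_unit Pu Pg).
  by rewrite !mulmxA mulmxV // mul1mx -mulmxA mulmxV // mulmx1.
suff /(Pl_conj lam_unit (Pl_inv lam_unit Pu)) : Pl lam (invmx u *m g *m u).
  by rewrite invmxK !mulmxA mulmxV // mul1mx -mulmxA mulmxV // mulmx1.
have uVu : invmx u \in unitmx by rewrite unitmx_inv.
have := Pl_conjmx nu_unit uVu Pg; rewrite invmxK.
apply: Pl_ext => a a0; rewrite nuE // !mulmxA mulVmx // mul1mx mulmxKV //.
Qed.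

Lemma Ll_Pl lam g : Ll lam g -> Pl lam g.
Proof. by case=> gu gL; split => //; exists g. Qed.

Lemma Ll_self lam a : cocharacter lam -> a != 0 -> Ll lam (lam a).
Proof.
case=> [_ lam_unit lamM] a0; split; first exact: lam_unit.
exists (polyC_mx (lam a)); rewrite evalmx_polyC; split => //; last exact: lam_unit.
by move=> b b0; rewrite evalmx_polyC -lamM // mulrC lamM // mulmxK ?lam_unit.
Qed.

End ParabolicConjugation.

Section WeightBlocks.
Variables (k : closedFieldType) (N : nat).
Implicit Types (g X : 'M[k]_N) (Q : 'M[{poly k}]_N).

Definition weight_lower D (E : nat -> 'M[k]_N) X :=
  forall r s, (r < s)%N -> (s < D)%N -> E r *m X *m E s = 0.

Definition weight_diag D (E : nat -> 'M[k]_N) X :=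
  forall r s, (r < D)%N -> (s < D)%N -> r != s -> E r *m X *m E s = 0.

Definition weight_levi D (E : nat -> 'M[k]_N) X := \sum_(r < D) E r *m X *m E r.

Variables (e D : nat) (E : nat -> 'M[k]_N) (lam : k -> 'M[k]_N).
Hypothesis wd : weight_decomp e D E lam.

Lemma weight_projMsum a r : (r < D)%N ->
  E r *m (\sum_(d < D) a ^+ d *: E d) = a ^+ r *: E r.
Proof.
case: wd => EE _ _ ltrD; rewrite mulmx_sumr -(sum_ord_delta (fun d => a ^+ d *: E r) ltrD).
by apply: eq_bigr => d _; rewrite -scalemxAr EE //; case: eqP => [->|]; rewrite ?scaler0.
Qed.

Lemma weight_sumMproj a r : (r < D)%N ->
  (\sum_(d < D) a ^+ d *: E d) *m E r = a ^+ r *: E r.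
Proof.
case: wd => EE _ _ ltrD; rewrite mulmx_suml -(sum_ord_delta (fun d => a ^+ d *: E r) ltrD).
by apply: eq_bigr => d _; rewrite -scalemxAl EE // eq_sym; case: eqP => [->|]; rewrite ?scaler0.
Qed.

Lemma weight_decomp_inv a : a != 0 ->
  lam a \in unitmx /\ invmx (lam a) = a ^+ e *: \sum_(d < D) a^-1 ^+ d *: E d.
Proof.
case: wd => _ sumE lamE a0.
have lamV : lam a *m (a ^+ e *: \sum_(d < D) a^-1 ^+ d *: E d) = 1%:M.
  rewrite lamE // -scalemxAl -scalemxAr scalerA mulVf ?expf_neq0 // scale1r.
  rewrite mulmx_suml -sumE; apply: eq_bigr => d _.
  by rewrite -scalemxAl weight_projMsum // scalerA -exprMn mulfV // expr1n scale1r.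
by have [lamu _] := mulmx1_unit lamV; split; last exact: mulmx1_invmx.
Qed.

Lemma weight_decomp_unit a : a != 0 -> lam a \in unitmx.
Proof. by case/weight_decomp_inv. Qed.

Lemma weight_conj_block a r s X : a != 0 -> (r < D)%N -> (s < D)%N ->
  E r *m (lam a *m X *m invmx (lam a)) *m E s = (a ^+ r * a^-1 ^+ s) *: (E r *m X *m E s).
Proof.
move=> a0 ltrD ltsD; have [_ lamV] := weight_decomp_inv a0; case: wd => _ _ lamE.
have Elam : E r *m lam a = ((a ^+ e)^-1 * a ^+ r) *: E r.
  by rewrite lamE // -scalemxAr weight_projMsum // scalerA.
have lamVE : invmx (lam a) *m E s = (a ^+ e * a^-1 ^+ s) *: E s.
  by rewrite lamV -scalemxAl weight_sumMproj // scalerA.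
rewrite !mulmxA Elam -!mulmxA lamVE -scalemxAl -!scalemxAr scalerA !mulmxA.
by congr (_ *: _); rewrite -mulrA mulrCA mulKf ?expf_neq0.
Qed.

Lemma weight_blocks X : X = \sum_(r < D) \sum_(s < D) E r *m X *m E s.
Proof.
case: wd => _ sumE _.
rewrite -{1}[X]mul1mx -{1}[X]mulmx1 -sumE mulmxA !mulmx_suml.
by apply: eq_bigr => r _; rewrite mulmx_sumr.
Qed.

(* The [(r, s)] block of [lam a g lam a^-1] is [a^(r - s)] times that of [g];
   the factor ['X^D] clears the denominator. *)
Lemma conj_curve_block g Q r s i j : conj_curve lam g Q -> (r < D)%N -> (s < D)%N ->
  'X^D * (polyC_mx (E r) *m Q *m polyC_mx (E s)) i j =
  'X^(r + D - s) * ((E r *m g *m E s) i j)%:P.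
Proof.
move=> gQ ltrD ltsD; apply/eqP; rewrite -subr_eq0; apply/eqP.
apply: poly_eq0_on_nonzero => a a0.
rewrite hornerD hornerN !hornerM !hornerXn hornerC -evalmx_entry !evalmxM !evalmx_polyC.
rewrite -gQ // weight_conj_block // mxE.
rewrite -addnBA ?(ltnW ltsD) // exprD exprB ?unitfE ?(ltnW ltsD) // exprVn.
by rewrite !mulrA [a ^+ D * _]mulrC subrr.
Qed.

Lemma conj_curve_lower g Q : conj_curve lam g Q ->
  weight_lower D E g /\ evalmx Q 0 = weight_levi D E g.
Proof.
move=> gQ; split=> [r s lt_rs ltsD|].
  have ltrD := ltn_trans lt_rs ltsD; apply/matrixP => i j.
  have := congr1 (fun p : {poly k} => p`_(r + D - s)) (conj_curve_block i j gQ ltrD ltsD).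
  by rewrite /= coefXnM coefXnMC eqxx ifT => [<-|]; rewrite ?mxE //; lia.
have Q0_block r s : (r < D)%N -> (s < D)%N ->
    E r *m evalmx Q 0 *m E s = if r == s then E r *m g *m E r else 0.
  move=> ltrD ltsD; apply/matrixP => i j.
  have := congr1 (fun p : {poly k} => p`_D) (conj_curve_block i j gQ ltrD ltsD).
  rewrite /= coefXnM ltnn subnn -horner_coef0 -evalmx_entry !evalmxM !evalmx_polyC.
  rewrite coefXnMC => ->; have -> : (D == r + D - s)%N = (r == s) by apply/eqP/eqP; lia.
  by case: eqP => [->|]; rewrite ?mxE.
rewrite [LHS]weight_blocks; apply: eq_bigr => r _.
rewrite (bigD1 r) //= Q0_block // eqxx big1 ?addr0 // => s sr.
by rewrite Q0_block // ifN // eq_sym.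
Qed.

Lemma weight_lower_conj_curve g : weight_lower D E g ->
  exists Q, conj_curve lam g Q /\ evalmx Q 0 = weight_levi D E g.
Proof.
move=> glow; exists (\sum_(r < D) \sum_(s < D)
   (if (s <= r)%N then 'X^(r - s) *: polyC_mx (E r *m g *m E s) else 0)); split.
  move=> a a0; rewrite (weight_blocks (lam a *m g *m invmx (lam a))) evalmx_sum.
  apply: eq_bigr => r _; rewrite evalmx_sum; apply: eq_bigr => s _.
  rewrite weight_conj_block //; case: leqP => [le_sr|lt_rs].
    by rewrite evalmxZ evalmx_polyC hornerXn exprB ?unitfE // exprVn.
  by rewrite glow // scaler0 evalmx0.
rewrite evalmx_sum; apply: eq_bigr => r _; rewrite evalmx_sum (bigD1 r) //=.
rewrite leqnn evalmxZ evalmx_polyC hornerXn subnn expr0 scale1r big1 ?addr0 // => s sr.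
case: leqP => [le_sr|_]; last by rewrite evalmx0.
have sr_nat : (s : nat) != r by exact: sr.
by rewrite evalmxZ hornerXn expr0n subn_eq0 leqNgt ltn_neqAle sr_nat le_sr scale0r.
Qed.

Lemma weight_diag_lower g : weight_diag D E g -> weight_lower D E g.
Proof.
by move=> gdiag r s lt_rs ltsD; apply: gdiag => //; [apply: ltn_trans lt_rs ltsD | rewrite ltn_eqF].
Qed.

Lemma weight_diag_levi g : weight_diag D E g -> weight_levi D E g = g.
Proof.
move=> gdiag; rewrite [RHS]weight_blocks; apply: eq_bigr => r _.
rewrite (bigD1 r) //= big1 ?addr0 // => s sr; apply: gdiag => //.
by rewrite -(inj_eq val_inj) eq_sym in sr.
Qed.

Lemma Pl_weightE g : Pl lam g <-> g \in unitmx /\ weight_lower D E g.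
Proof.
rewrite (Pl_curveE weight_decomp_unit); split=> [[gu [Q /conj_curve_lower []]]|[gu glow]].
  by [].
by split => //; have [Q [gQ _]] := weight_lower_conj_curve glow; exists Q.
Qed.

Lemma Ll_weightE g : Ll lam g <-> g \in unitmx /\ weight_diag D E g.
Proof.
rewrite Ll_curveE; split=> [[gu [Q [gQ Q0]]]|[gu gdiag]].
  split=> // r s ltrD ltsD sr; have [_] := conj_curve_lower gQ; rewrite Q0 => ->.
  rewrite mulmx_sumr mulmx_suml big1 // => t _; case: wd => EE _ _.
  rewrite !mulmxA EE // -!mulmxA EE //; case: eqP => [<-|]; last by rewrite !mul0mx.
  by rewrite (negbTE sr) !mulmx0.
split=> //; have [Q [gQ Q0]] := weight_lower_conj_curve (weight_diag_lower gdiag).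
by exists Q; rewrite Q0 weight_diag_levi.
Qed.

End WeightBlocks.

Section WeightCommutation.
Variables (k : closedFieldType) (N : nat).
Implicit Types (B X Y : 'M[k]_N) (lam mu : k -> 'M[k]_N).

Lemma weight_decomp_cochar e D (E : nat -> 'M[k]_N) lam :
  weight_decomp e D E lam -> cocharacter lam.
Proof.
move=> wd; have [EE _ lamE] := wd; split.
- exists e, (\sum_(d < D) 'X^d *: polyC_mx (E d)) => a a0.
  rewrite lamE // evalmx_sum; congr (_ *: _); apply: eq_bigr => d _.
  by rewrite evalmxZ hornerXn evalmx_polyC.
- exact: weight_decomp_unit wd.
- move=> a b a0 b0; rewrite !lamE ?mulf_neq0 // -scalemxAl -scalemxAr scalerA.
  rewrite exprMn invfM; congr (_ *: _); rewrite mulmx_suml; apply: eq_bigr => d _.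
  by rewrite -scalemxAl (weight_projMsum wd) // scalerA exprMn.
Qed.

Lemma weight_proj_comm e D (E : nat -> 'M[k]_N) lam B : weight_decomp e D E lam ->
  (forall a, a != 0 -> B *m lam a = lam a *m B) ->
  forall d, (d < D)%N -> B *m E d = E d *m B.
Proof.
move=> [_ _ lamE] Blam d ltdD; apply/eqP; rewrite -subr_eq0; apply/eqP; move: d ltdD.
apply: (mx_coef_eq0_on_nonzero (C := fun d => B *m E d - E d *m B)) => a a0.
have := Blam a a0; rewrite lamE // -scalemxAl -scalemxAr.
move/(congr1 (fun M => a ^+ e *: M)); rewrite !scalerA mulfV ?expf_neq0 // !scale1r => BW.
rewrite -[RHS](subrr (B *m \sum_(d < D) a ^+ d *: E d)) [X in _ - X]BW.
rewrite mulmx_sumr mulmx_suml -sumrB.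
by apply: eq_bigr => d _; rewrite scalerBr scalemxAr scalemxAl.
Qed.

Lemma weight_projs_comm e1 D1 (E : nat -> 'M[k]_N) lam e2 D2 (F : nat -> 'M[k]_N) mu :
  weight_decomp e1 D1 E lam -> weight_decomp e2 D2 F mu ->
  (forall a b, a != 0 -> b != 0 -> lam a *m mu b = mu b *m lam a) ->
  forall p q, (p < D1)%N -> (q < D2)%N -> E p *m F q = F q *m E p.
Proof.
move=> wdE wdF lam_mu p q ltpD ltqD; apply: (weight_proj_comm wdF) => // b b0.
apply: esym; apply: (weight_proj_comm wdE) => // a a0.
exact: esym (lam_mu a b a0 b0).
Qed.

Lemma weight_lowerM e D (F : nat -> 'M[k]_N) mu X Y : weight_decomp e D F mu ->
  weight_lower D F X -> weight_lower D F Y -> weight_lower D F (X *m Y).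
Proof.
move=> [FF sumF _] Xlow Ylow r s lt_rs ltsD.
rewrite -[Y]mul1mx -sumF !mulmx_suml !mulmx_sumr mulmx_suml big1 // => t _.
have [le_tr|lt_rt] := leqP t r.
  by rewrite -!mulmxA (mulmxA (F t) Y) Ylow ?mulmx0 //; apply: leq_ltn_trans lt_rs.
by rewrite !mulmxA Xlow // !mul0mx.
Qed.

End WeightCommutation.

Section LeviProjection.
Variables (k : closedFieldType) (N : nat).
Implicit Types (B X Y : 'M[k]_N).
Variables (e D : nat) (F : nat -> 'M[k]_N) (mu : k -> 'M[k]_N).
Hypothesis wd : weight_decomp e D F mu.

Local Notation levi := (weight_levi D F).

Lemma weight_proj_orth r s : (r < D)%N -> (s < D)%N ->
  F r *m F s = if r == s then F r else 0.
Proof. by case: wd => FF _ _; apply: FF. Qed.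

Lemma levi_lower X : weight_lower D F (levi X).
Proof.
move=> r s lt_rs ltsD; have ltrD := ltn_trans lt_rs ltsD.
rewrite mulmx_sumr mulmx_suml big1 // => q _.
rewrite !mulmxA weight_proj_orth //; case: eqP => [<-|]; last by rewrite !mul0mx.
by rewrite -!mulmxA weight_proj_orth // (ltn_eqF lt_rs) !mulmx0.
Qed.

Lemma weight_projMlevi X q : (q < D)%N -> F q *m levi X = F q *m X *m F q.
Proof.
move=> ltqD; rewrite mulmx_sumr (bigD1 (Ordinal ltqD)) //= big1 ?addr0.
  by rewrite !mulmxA weight_proj_orth // eqxx.
by move=> t tq; rewrite !mulmxA weight_proj_orth // ifN ?mul0mx // eq_sym.
Qed.

Lemma leviMweight_proj X q : (q < D)%N -> levi X *m F q = F q *m X *m F q.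
Proof.
move=> ltqD; rewrite mulmx_suml (bigD1 (Ordinal ltqD)) //= big1 ?addr0.
  by rewrite -!mulmxA weight_proj_orth // eqxx.
by move=> t tq; rewrite -!mulmxA weight_proj_orth // ifN ?mulmx0.
Qed.

Lemma levi_weight_proj_comm X q : (q < D)%N -> F q *m levi X = levi X *m F q.
Proof. by move=> ltqD; rewrite weight_projMlevi // leviMweight_proj. Qed.

Lemma levi_comm B X : (forall q, (q < D)%N -> B *m F q = F q *m B) ->
  B *m X = X *m B -> B *m levi X = levi X *m B.
Proof.
move=> BF BX; rewrite mulmx_sumr mulmx_suml; apply: eq_bigr => q _.
by rewrite !mulmxA BF // -(mulmxA (F q)) BX -!mulmxA BF.
Qed.

Lemma leviM X Y : weight_lower D F X -> weight_lower D F Y ->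
  levi (X *m Y) = levi X *m levi Y.
Proof.
move=> Xlow Ylow; rewrite [in RHS]mulmx_sumr; apply: eq_bigr => q _.
rewrite (mulmxA (levi X)) (mulmxA (levi X)) leviMweight_proj //; case: wd => _ sumF _.
rewrite -{1}[Y]mul1mx -sumF !mulmx_suml !mulmx_sumr !mulmx_suml (bigD1 q) //= big1 ?addr0.
  by rewrite !mulmxA.
move=> t tq; have tq_nat : (t : nat) != q by exact: tq.
have [lt_tq|lt_qt] := ltnP t q.
  by rewrite -!mulmxA (mulmxA (F t)) Ylow // !mulmx0.
by rewrite !mulmxA Xlow ?mul0mx // ltn_neqAle eq_sym tq_nat.
Qed.

Lemma leviZ a X : levi (a *: X) = a *: levi X.
Proof.
by rewrite /weight_levi scaler_sumr; apply: eq_bigr => q _; rewrite -scalemxAr -scalemxAl.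
Qed.

Lemma levi_sum (I : Type) (r : seq I) (P : pred I) (G : I -> 'M[k]_N) :
  levi (\sum_(i <- r | P i) G i) = \sum_(i <- r | P i) levi (G i).
Proof.
rewrite /weight_levi exchange_big; apply: eq_bigr => q _.
by rewrite mulmx_sumr mulmx_suml.
Qed.

Lemma levi0 : levi 0 = 0.
Proof. by rewrite /weight_levi big1 // => q _; rewrite mulmx0 mul0mx. Qed.

Lemma levi1 : levi 1%:M = 1%:M.
Proof.
case: wd => _ sumF _; rewrite /weight_levi -[RHS]sumF; apply: eq_bigr => q _.
by rewrite mulmx1 weight_proj_orth // eqxx.
Qed.

Lemma levi_id X : levi (levi X) = levi X.
Proof.
rewrite {1}/weight_levi; apply: eq_bigr => q _.
by rewrite weight_projMlevi // -mulmxA weight_proj_orth // eqxx.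
Qed.

End LeviProjection.

Section LeviConjugate.
Variables (k : closedFieldType) (N : nat).
Implicit Type B : 'M[k]_N.
Variables (e D : nat) (E : nat -> 'M[k]_N) (lam : k -> 'M[k]_N).
Variables (e' D' : nat) (F : nat -> 'M[k]_N) (mu : k -> 'M[k]_N).
Hypotheses (wdE : weight_decomp e D E lam) (wdF : weight_decomp e' D' F mu)
  (lam_Pmu : forall a, a != 0 -> Pl mu (lam a)).

Local Notation levi := (weight_levi D' F).

Lemma weight_proj_lower d : (d < D)%N -> weight_lower D' F (E d).
Proof.
move=> ltdD r s lt_rs ltsD; move: d ltdD.
apply: (mx_coef_eq0_on_nonzero (C := fun d => F r *m E d *m F s)) => a a0.
have [_ /(_ r s lt_rs ltsD)] := (Pl_weightE wdF _).1 (lam_Pmu a0).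
case: wdE => _ _ -> //; rewrite -scalemxAr -scalemxAl => /eqP.
rewrite scaler_eq0 invr_eq0 expf_eq0 (negbTE a0) andbF /= => /eqP FEF0.
by rewrite -[RHS]FEF0 mulmx_sumr mulmx_suml; apply: eq_bigr => d _; rewrite -scalemxAr -scalemxAl.
Qed.

Lemma levi_weight_decomp :
  weight_decomp e D (fun d => levi (E d)) (fun a => levi (lam a)).
Proof.
case: wdE => EE sumE lamE; split.
- move=> d d' ltdD ltd'D.
  rewrite -(leviM wdF (weight_proj_lower ltdD) (weight_proj_lower ltd'D)) EE //.
  by case: ifP; rewrite ?levi0.
- by rewrite -levi_sum sumE (levi1 wdF).
- move=> a a0; rewrite lamE // leviZ levi_sum; congr (_ *: _).
  by apply: eq_bigr => d _; rewrite leviZ.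
Qed.

(* [u] maps the [d]-th weight space of [lam] onto that of the Levi projection. *)
Definition levi_conjugator := \sum_(d < D) levi (E d) *m E d.

Local Notation u := levi_conjugator.

Lemma levi_conjugatorM_proj d : (d < D)%N -> u *m E d = levi (E d) *m u.
Proof.
move=> ltdD; case: wdE => EE _ _; case: levi_weight_decomp => EE' _ _.
rewrite mulmx_suml mulmx_sumr (bigD1 (Ordinal ltdD)) //= big1 ?addr0.
  rewrite (bigD1 (Ordinal ltdD)) //= big1 ?addr0.
    by rewrite -mulmxA EE // eqxx mulmxA EE' // eqxx.
  by move=> t td; rewrite mulmxA EE' // ifN ?mul0mx // eq_sym.
by move=> t td; rewrite -mulmxA EE // ifN ?mulmx0.
Qed.

Lemma levi_conjugatorM a : a != 0 -> u *m lam a = levi (lam a) *m u.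
Proof.
move=> a0; case: wdE => _ _ lamE; case: levi_weight_decomp => _ _ /(_ a a0) /= lamE'.
rewrite lamE' lamE // -scalemxAr -scalemxAl; congr (_ *: _).
rewrite mulmx_sumr mulmx_suml; apply: eq_bigr => d _.
by rewrite -scalemxAr -scalemxAl levi_conjugatorM_proj.
Qed.

Lemma levi_conjugator_lower : weight_lower D' F u.
Proof.
move=> r s lt_rs ltsD; rewrite mulmx_sumr mulmx_suml big1 // => d _.
exact: weight_lowerM wdF (levi_lower wdF (E d)) (weight_proj_lower (ltn_ord d)) _ _ lt_rs ltsD.
Qed.

Lemma levi_levi_conjugator : levi u = 1%:M.
Proof.
case: levi_weight_decomp => EE' sumE' _; rewrite levi_sum -sumE'.
apply: eq_bigr => d _.
rewrite (leviM wdF (levi_lower wdF (E d)) (weight_proj_lower (ltn_ord d))).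
by rewrite (levi_id wdF) EE' // eqxx.
Qed.

Lemma levi_conjugator_unit : u \in unitmx.
Proof.
have [Q [uQ Q0]] := weight_lower_conj_curve wdF levi_conjugator_lower.
have := det_conj_curve0 (weight_decomp_unit wdF) uQ.
by rewrite Q0 levi_levi_conjugator det1 unitmxE => <-; rewrite unitr1.
Qed.

Lemma Pl_levi_conjugator : Pl mu u.
Proof.
by apply/(Pl_weightE wdF); split; [exact: levi_conjugator_unit | exact: levi_conjugator_lower].
Qed.

Lemma levi_cochar_conj a : a != 0 -> levi (lam a) = u *m lam a *m invmx u.
Proof. by move=> a0; rewrite levi_conjugatorM // mulmxK // levi_conjugator_unit. Qed.

Lemma levi_cochar_comm a b : b != 0 -> levi (lam a) *m mu b = mu b *m levi (lam a).
Proof.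
move=> b0; case: wdF => _ _ muE; rewrite muE // -scalemxAr -scalemxAl; congr (_ *: _).
rewrite mulmx_sumr mulmx_suml; apply: eq_bigr => q _.
by rewrite -scalemxAr -scalemxAl (levi_weight_proj_comm wdF).
Qed.

Lemma levi_conjugator_comm B : (forall a, a != 0 -> B *m lam a = lam a *m B) ->
  (forall b, b != 0 -> B *m mu b = mu b *m B) -> B *m u = u *m B.
Proof.
move=> Blam Bmu; have BE := weight_proj_comm wdE Blam; have BF := weight_proj_comm wdF Bmu.
rewrite mulmx_sumr mulmx_suml; apply: eq_bigr => d _.
by rewrite mulmxA (levi_comm BF) ?BE // -!mulmxA BE.
Qed.

End LeviConjugate.

Section ClosedSubgroups.
Variables (k : closedFieldType) (N : nat).
Implicit Types (K : mxset k N) (lam mu : k -> 'M[k]_N).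

(* A polynomial in the entries of [Q b] is a polynomial in [b] vanishing on [k^*]. *)
Lemma zclosed_curve0 K (Q : 'M[{poly k}]_N) : zclosed K ->
  (forall b, b != 0 -> K (evalmx Q b)) -> evalmx Q 0 \in unitmx -> K (evalmx Q 0).
Proof.
case=> S KS KQ Q0u; apply/KS; split => // p Sp.
pose q : {poly k} := mmap (@polyC k) (fun i => mxvec Q 0 i) p.
have qE b : q.[b] = p.@[mxcoords (evalmx Q b)].
  rewrite /q /mmap /mmap1 mevalE horner_sum; apply: eq_bigr => m _.
  rewrite hornerM hornerC horner_prod; congr (_ * _); apply: eq_bigr => i _.
  by rewrite horner_exp /mxcoords evalmxE -map_mxvec mxE.
rewrite -qE; suff -> : q = 0 by rewrite horner0.
by apply: poly_eq0_on_nonzero => b b0; rewrite qE; have /KS [_ ->] := KQ b b0.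
Qed.

(* [nu a = lim_(b -> 0) mu b (lam a) mu b^-1] lies in the closed subgroup [K]. *)
Lemma levi_conjugate K lam mu : subgroup K -> zclosed K ->
  cocharacter_of K lam -> cocharacter_of K mu ->
  (forall a, a != 0 -> Pl mu (lam a)) ->
  exists u nu, [/\ Pl mu u, cocharacter_of K nu,
    forall a, a != 0 -> nu a = u *m lam a *m invmx u,
    forall a b, a != 0 -> b != 0 -> nu a *m mu b = mu b *m nu a
  & forall B, (forall a, a != 0 -> B *m lam a = lam a *m B) ->
      (forall b, b != 0 -> B *m mu b = mu b *m B) -> B *m u = u *m B].
Proof.
move=> [_ _ KM KV] Kclosed [lam_cochar lamK] [mu_cochar muK] lam_Pmu.
have [e [D [E wdE]]] := cocharacter_weight_decomp lam_cochar.
have [e' [D' [F wdF]]] := cocharacter_weight_decomp mu_cochar.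
have wdnu := levi_weight_decomp wdE wdF lam_Pmu.
exists (levi_conjugator D E D' F), (fun a => weight_levi D' F (lam a)); split.
- exact: Pl_levi_conjugator wdE wdF lam_Pmu.
- split=> [|a a0]; first exact: weight_decomp_cochar wdnu.
  have [_ lam_low] := (Pl_weightE wdF _).1 (lam_Pmu a a0).
  have [Q [lamQ Q0]] := weight_lower_conj_curve wdF lam_low.
  rewrite -Q0; apply: zclosed_curve0 => // [b b0|].
    by rewrite -lamQ //; apply: KM (KM _ _ (muK b b0) (lamK a a0)) (KV _ (muK b b0)).
  by rewrite Q0; apply: (weight_decomp_unit wdnu).
- exact: levi_cochar_conj wdE wdF lam_Pmu.
- by move=> a b _ b0; apply: (levi_cochar_comm lam wdF a b0).
- exact: levi_conjugator_comm wdE wdF.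
Qed.

End ClosedSubgroups.

Section LeviInclusion.
Variables (k : closedFieldType) (N : nat).
Implicit Types (X Y Z : 'M[k]_N).

Lemma exists_mulmx_neq0 X Y : X != 0 -> Y != 0 -> exists Z, X *m Z *m Y != 0.
Proof.
have entry_neq0 (W : 'M[k]_N) : W != 0 -> exists ij : 'I_N * 'I_N, W ij.1 ij.2 != 0.
  move=> W0; apply/existsP; apply: contraNT W0 => /existsPn W0.
  by apply/eqP/matrixP => i j; rewrite mxE; apply/eqP; have := W0 (i, j); rewrite negbK.
move=> /entry_neq0 [[i r] /= Xir] /entry_neq0 [[c j] /= Ycj]; exists (delta_mx r c).
have XdeltaE t : (X *m delta_mx r c) i t = X i r * (t == c)%:R.
  rewrite !mxE (bigD1 r) //= big1 ?addr0; first by rewrite !mxE eqxx.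
  by move=> u ur; rewrite !mxE (negbTE ur) mulr0.
apply/eqP => /matrixP /(_ i j); rewrite !mxE (bigD1 c) //= big1 ?addr0.
  by rewrite XdeltaE eqxx mulr1 => /eqP; rewrite mulf_eq0 (negbTE Xir) (negbTE Ycj).
by move=> t tc; rewrite XdeltaE (negbTE tc) mulr0 mul0r.
Qed.

Variables (e1 D1 : nat) (E : nat -> 'M[k]_N) (nu : k -> 'M[k]_N).
Variables (e2 D2 : nat) (F : nat -> 'M[k]_N) (mu : k -> 'M[k]_N).
Hypotheses (wdE : weight_decomp e1 D1 E nu) (wdF : weight_decomp e2 D2 F mu)
  (EF : forall p q, (p < D1)%N -> (q < D2)%N -> E p *m F q = F q *m E p)
  (Pmu_nu : forall g, Pl mu g -> Pl nu g).

(* Otherwise [1 + E p F q Z F q E p'] would lie in [P_mu] but not in [P_nu]. *)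
Lemma weight_projs_no_crossing p p' q : (p < p')%N -> (p' < D1)%N -> (q < D2)%N ->
  E p *m F q = 0 \/ F q *m E p' = 0.
Proof.
move=> lt_pp' ltp'D ltqD; have ltpD := ltn_trans lt_pp' ltp'D.
case: (eqVneq (E p *m F q) 0) => [|EF0]; [by left | right].
apply/eqP; apply: contraT => FE0; have [Z xneq0] := exists_mulmx_neq0 EF0 FE0.
set x := E p *m F q *m Z *m (F q *m E p') in xneq0.
have [EE _ _] := wdE; have [FF _ _] := wdF.
have xx : x *m x = 0.
  by rewrite /x !mulmxA -(mulmxA _ (E p') (E p)) EE // (gtn_eqF lt_pp') mulmx0 !mul0mx.
have x1u : 1%:M + x \in unitmx.
  have /mulmx1_unit [] // : (1%:M + x) *m (1%:M - x) = 1%:M.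
  by rewrite mulmxDl mul1mx mulmxBr mulmx1 xx subr0 subrK.
have /Pmu_nu : Pl mu (1%:M + x).
  apply/(Pl_weightE wdF); split => // r s lt_rs ltsD; have ltrD := ltn_trans lt_rs ltsD.
  rewrite mulmxDr mulmxDl mulmx1 FF // (ltn_eqF lt_rs) add0r /x.
  have [<-|rq] := eqVneq r q.
    rewrite -!mulmxA (EF ltp'D ltsD) !mulmxA -(mulmxA _ (F r) (F s)) FF //.
    by rewrite (ltn_eqF lt_rs) mulmx0 !mul0mx.
  rewrite !mulmxA -(EF ltpD ltrD) -(mulmxA (E p) (F r) (F q)) FF // (negbTE rq).
  by rewrite mulmx0 !mul0mx.
move/(Pl_weightE wdE) => [_ /(_ p p' lt_pp' ltp'D)].
rewrite mulmxDr mulmxDl mulmx1 EE // (ltn_eqF lt_pp') add0r.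
have -> : E p *m x *m E p' = x by rewrite /x !mulmxA EE // eqxx -!mulmxA EE // eqxx.
by move/eqP; rewrite (negbTE xneq0).
Qed.

Lemma Ll_weight_subset h : Ll mu h -> Ll nu h.
Proof.
move/(Ll_weightE wdF) => [hu hdiag]; apply/(Ll_weightE wdE); split => // p p' ltpD ltp'D pp'.
rewrite -(weight_diag_levi wdF hdiag) mulmx_sumr mulmx_suml big1 // => q _.
have ltqD := ltn_ord q.
have -> : E p *m (F q *m h *m F q) *m E p' = E p *m F q *m h *m (F q *m E p').
  by rewrite !mulmxA.
have [lt_pp'|lt_p'p|/eqP] := ltngtP p p'; last by rewrite (negbTE pp').
  by case: (weight_projs_no_crossing lt_pp' ltp'D ltqD) => ->; rewrite ?mulmx0 ?mul0mx.
case: (weight_projs_no_crossing lt_p'p ltpD ltqD) => /eqP.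
  by rewrite EF // => /eqP ->; rewrite mulmx0.
by rewrite -EF // => /eqP ->; rewrite !mul0mx.
Qed.

End LeviInclusion.

Lemma Ll_subset_of_Pl_subset (k : closedFieldType) (N : nat) (nu mu : k -> 'M[k]_N) :
  cocharacter nu -> cocharacter mu ->
  (forall a b, a != 0 -> b != 0 -> nu a *m mu b = mu b *m nu a) ->
  (forall g, Pl mu g -> Pl nu g) -> forall g, Ll mu g -> Ll nu g.
Proof.
move=> /cocharacter_weight_decomp [e1 [D1 [E wdE]]].
move=> /cocharacter_weight_decomp [e2 [D2 [F wdF]]] nu_mu Pmu_nu.
exact: Ll_weight_subset wdE wdF (weight_projs_comm wdE wdF nu_mu) Pmu_nu.
Qed.

Section DirectSumBlocks.
Variables (k : closedFieldType) (N n : nat) (Vs : 'I_n -> 'M[k]_N).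
Hypotheses (Vs_direct : mxdirect (\sum_(i < n) Vs i))
  (Vs_full : row_full (\sum_(i < n) Vs i)%MS).
Implicit Types (X Y g u : 'M[k]_N) (lam : k -> 'M[k]_N).

(* Locked, so that rewriting with [mulmxA] does not see through the product
   defining [proj_mx]. *)
Definition blk_proj i := locked (proj_mx (Vs i) (\sum_(j | j != i) Vs j)%MS).

Local Notation B := blk_proj.

Lemma blk_proj_sub i : (B i <= Vs i)%MS.
Proof. by rewrite -[B i]mul1mx /blk_proj -lock proj_mx_sub. Qed.

Lemma blk_proj_act i j X : (X <= Vs i)%MS -> X *m B j = if i == j then X else 0.
Proof.
have cap0 l : (Vs l :&: \sum_(j | j != l) Vs j = 0)%MS by apply: (mxdirect_sumsP Vs_direct).
move=> XVi; rewrite /blk_proj -lock; case: eqVneq => [<-|ij]; first by rewrite proj_mx_id.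
rewrite proj_mx_0 //; apply: submx_trans XVi _.
by apply: (sumsmx_sup i) => //; rewrite eq_sym.
Qed.

Lemma blk_projM i j : B i *m B j = if i == j then B i else 0.
Proof. exact/blk_proj_act/blk_proj_sub. Qed.

Lemma blk_proj_idem i : B i *m B i = B i.
Proof. by rewrite blk_projM eqxx. Qed.

Lemma blk_proj_sum : \sum_(i < n) B i = 1%:M.
Proof.
have /sub_sumsmxP [w wE] : (1%:M <= \sum_(i < n) Vs i)%MS by rewrite sub1mx.
rewrite -[LHS]mul1mx {1}wE mulmx_suml [RHS]wE; apply: eq_bigr => i _.
have ViB j : Vs i *m B j = if i == j then Vs i else 0 by apply: blk_proj_act.
rewrite -mulmxA mulmx_sumr (bigD1 i) //= ViB eqxx big1 ?addr0 //.
by move=> j ji; rewrite ViB eq_sym (negbTE ji).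
Qed.

Lemma blk_proj_fixed j g : Vs j *m g = Vs j -> B j *m g = B j.
Proof. by move=> Vjg; case/submxP: (blk_proj_sub j) => W ->; rewrite -mulmxA Vjg. Qed.

Lemma blk_proj_decomp X : X = \sum_(i < n) B i *m X.
Proof. by rewrite -mulmx_suml blk_proj_sum mul1mx. Qed.

Lemma blk_proj_of_blocks (f : 'I_n -> 'M[k]_N) i :
  B i *m (\sum_j B j *m f j) = B i *m f i.
Proof.
rewrite mulmx_sumr (bigD1 i) //= mulmxA blk_proj_idem big1 ?addr0 // => j ji.
by rewrite mulmxA blk_projM eq_sym (negbTE ji) mul0mx.
Qed.

Definition blkdiag X := forall j, B j *m X = X *m B j.

Lemma blkdiag_of_stable g : (forall j, (Vs j *m g <= Vs j)%MS) -> blkdiag g.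
Proof.
move=> gVs j; have Bg i : B i *m g *m B j = if i == j then B i *m g else 0.
  by apply: blk_proj_act; apply: submx_trans (gVs i); apply/submxMr/blk_proj_sub.
rewrite -[g in RHS]mul1mx -blk_proj_sum !mulmx_suml (bigD1 j) //= Bg eqxx big1 ?addr0 //.
by move=> i ij; rewrite Bg (negbTE ij).
Qed.

Lemma blkdiagM X Y : blkdiag X -> blkdiag Y -> blkdiag (X *m Y).
Proof. by move=> BX BY j; rewrite mulmxA BX -!mulmxA BY. Qed.

Lemma blk_proj_prod (f : 'I_n -> 'M[k]_N) j :
  (forall l, blkdiag (f l)) -> (forall l, l != j -> B j *m f l = B j) ->
  B j *m \big[mulmx/1%:M]_(l < n) f l = B j *m f j.
Proof.
move=> Bf fixf; have prod_seq (s : seq 'I_n) : uniq s ->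
    B j *m \big[mulmx/1%:M]_(l <- s) f l = if j \in s then B j *m f j else B j.
  elim: s => [|l s IHs] /=; first by rewrite big_nil mulmx1.
  case/andP => ls /IHs {}IHs; rewrite big_cons in_cons mulmxA.
  have [jl|jl] /= := eqVneq j l; last by rewrite fixf 1?eq_sym.
  by subst l; rewrite (Bf j j) -mulmxA IHs (negbTE ls).
by have := prod_seq _ (index_enum_uniq 'I_n); rewrite mem_index_enum.
Qed.

(* [blk_part i X] acts as [X] on [Vs i] and as the identity on the other [Vs j]. *)
Definition blk_part i X := B i *m X + (1%:M - B i).

Lemma blk_proj_compl i : B i *m (1%:M - B i) = 0.
Proof. by rewrite mulmxBr mulmx1 blk_proj_idem subrr. Qed.

Lemma blk_compl_proj i : (1%:M - B i) *m B i = 0.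
Proof. by rewrite mulmxBl mul1mx blk_proj_idem subrr. Qed.

Lemma blk_compl_idem i : (1%:M - B i) *m (1%:M - B i) = 1%:M - B i.
Proof. by rewrite mulmxBr mulmx1 blk_compl_proj subr0. Qed.

Lemma blk_partM i X Y : B i *m X = X *m B i -> blk_part i X *m blk_part i Y = blk_part i (X *m Y).
Proof.
move=> BX; rewrite /blk_part mulmxDl (mulmxDr (B i *m X)) (mulmxDr (1%:M - B i)).
have -> : B i *m X *m (B i *m Y) = B i *m (X *m Y).
  by rewrite mulmxA BX -(mulmxA X) blk_proj_idem -BX -mulmxA.
have -> : B i *m X *m (1%:M - B i) = 0 by rewrite BX -mulmxA blk_proj_compl mulmx0.
by rewrite mulmxA blk_compl_proj mul0mx blk_compl_idem addr0 add0r.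
Qed.

Lemma blk_part1 i : blk_part i 1%:M = 1%:M.
Proof. by rewrite /blk_part mulmx1 addrC subrK. Qed.

Lemma blk_part_id i X : (forall j, j != i -> B j *m X = B j) -> blk_part i X = X.
Proof.
move=> fixX; rewrite /blk_part [RHS]blk_proj_decomp (bigD1 i) //=; congr (_ + _).
rewrite -blk_proj_sum (bigD1 i) //= addrC addrK.
by apply: eq_bigr => j ji; rewrite fixX.
Qed.

Lemma blk_part_unit i X : X \in unitmx -> blkdiag X ->
  blk_part i X \in unitmx /\ invmx (blk_part i X) = blk_part i (invmx X).
Proof.
move=> Xu BX; have : blk_part i X *m blk_part i (invmx X) = 1%:M.
  by rewrite blk_partM ?BX // mulmxV // blk_part1.
by move=> XV1; have [XBu _] := mulmx1_unit XV1; split; last exact: mulmx1_invmx.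
Qed.

Lemma blk_part_conj i X Y g : blkdiag X -> blkdiag g ->
  blk_part i X *m g *m blk_part i Y = B i *m (X *m g *m Y) + (1%:M - B i) *m g.
Proof.
move=> BX Bg; set C := 1%:M - B i.
have commC Z : blkdiag Z -> Z *m C = C *m Z.
  by move=> BZ; rewrite mulmxBr mulmx1 mulmxBl mul1mx BZ.
rewrite /blk_part -/C (mulmxDl (B i *m X) C g) (mulmxDl (B i *m X *m g) (C *m g)).
rewrite (mulmxDr (B i *m X *m g)) (mulmxDr (C *m g)).
have -> : B i *m X *m g *m (B i *m Y) = B i *m (X *m g *m Y).
  rewrite !mulmxA -(mulmxA _ g (B i)) -Bg mulmxA -(mulmxA _ X (B i)) -BX.
  by rewrite mulmxA blk_proj_idem.
have -> : B i *m X *m g *m C = 0.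
  rewrite -(mulmxA _ g C) commC // mulmxA -(mulmxA (B i) X C) commC //.
  by rewrite mulmxA blk_proj_compl !mul0mx.
have -> : C *m g *m (B i *m Y) = 0.
  by rewrite mulmxA -(mulmxA C g (B i)) -Bg mulmxA blk_compl_proj !mul0mx.
by rewrite -(mulmxA C g C) commC // (mulmxA C C g) blk_compl_idem addr0 add0r.
Qed.

Lemma blk_part_conjmx i u X : u \in unitmx -> blkdiag u ->
  blk_part i (u *m X *m invmx u) = u *m blk_part i X *m invmx u.
Proof.
move=> uu Bu; rewrite /blk_part mulmxDr mulmxDl !mulmxA Bu; congr (_ + _).
by rewrite mulmxBr mulmx1 mulmxBl mulmxV // -Bu mulmxK.
Qed.

Section BlockCocharacters.
Variable lam : k -> 'M[k]_N.
Hypotheses (lam_unit : forall a, a != 0 -> lam a \in unitmx)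
  (lam_blk : forall a, a != 0 -> blkdiag (lam a)).

Lemma blk_part_cochar_unit i a : a != 0 -> blk_part i (lam a) \in unitmx.
Proof. by move=> a0; case: (blk_part_unit i (lam_unit a0) (lam_blk a0)). Qed.

Lemma conj_curve_blk_part i g Q : blkdiag g -> conj_curve lam g Q ->
  conj_curve (fun a => blk_part i (lam a)) g
    (polyC_mx (B i) *m Q + polyC_mx ((1%:M - B i) *m g)).
Proof.
move=> Bg gQ a a0 /=; have [_ ->] := blk_part_unit i (lam_unit a0) (lam_blk a0).
have lamB := lam_blk a0.
by rewrite blk_part_conj // evalmxD evalmxM !evalmx_polyC -gQ.
Qed.

Lemma conj_curve_of_blk_parts g (Qs : 'I_n -> 'M[{poly k}]_N) : blkdiag g ->
  (forall i, conj_curve (fun a => blk_part i (lam a)) g (Qs i)) ->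
  conj_curve lam g (\sum_i polyC_mx (B i) *m Qs i).
Proof.
move=> Bg gQs a a0; rewrite evalmx_sum [LHS]blk_proj_decomp.
apply: eq_bigr => i _; rewrite evalmxM evalmx_polyC -gQs //=.
have [_ ->] := blk_part_unit i (lam_unit a0) (lam_blk a0).
have lamB := lam_blk a0.
rewrite blk_part_conj // mulmxDr !mulmxA blk_proj_idem.
by rewrite blk_proj_compl mul0mx addr0.
Qed.

Lemma Pl_blk_partsE g : blkdiag g -> g \in unitmx ->
  Pl lam g <-> forall i, Pl (fun a => blk_part i (lam a)) g.
Proof.
move=> Bg gu; rewrite (Pl_curveE lam_unit); split=> [[_ [Q gQ]] i|Pg].
  apply/(Pl_curveE (blk_part_cochar_unit i)); split => //.
  by eexists; apply: conj_curve_blk_part gQ.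
have /fin_all_exists [Qs gQs] i : exists Q, conj_curve (fun a => blk_part i (lam a)) g Q.
  by have /(Pl_curveE (blk_part_cochar_unit i)) [_] := Pg i.
by split => //; eexists; apply: conj_curve_of_blk_parts gQs.
Qed.

Lemma Ll_blk_partsE g : blkdiag g -> g \in unitmx ->
  Ll lam g <-> forall i, Ll (fun a => blk_part i (lam a)) g.
Proof.
move=> Bg gu; rewrite Ll_curveE; split=> [[_ [Q [gQ Q0]]] i|Lg].
  apply/Ll_curveE; split => //; eexists; split; first exact: conj_curve_blk_part gQ.
  by rewrite evalmxD evalmxM !evalmx_polyC Q0 -mulmxDl addrC subrK mul1mx.
have /fin_all_exists [Qs gQs] i :
    exists Q, conj_curve (fun a => blk_part i (lam a)) g Q /\ evalmx Q 0 = g.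
  by have /Ll_curveE [_] := Lg i.
split => //; exists (\sum_i polyC_mx (B i) *m Qs i); split.
  by apply: conj_curve_of_blk_parts => // i; case: (gQs i).
rewrite evalmx_sum [RHS]blk_proj_decomp; apply: eq_bigr => i _.
by rewrite evalmxM evalmx_polyC; case: (gQs i) => _ ->.
Qed.

Lemma blk_part_cochar i : cocharacter lam -> cocharacter (fun a => blk_part i (lam a)).
Proof.
case=> [[e [P lamP]] _ lamM]; split.
- exists e, (polyC_mx (B i) *m P + 'X^e *: polyC_mx (1%:M - B i)) => a a0.
  rewrite /blk_part lamP // evalmxD evalmxM evalmxZ !evalmx_polyC hornerXn scalerDr.
  by rewrite scalerA mulVf ?expf_neq0 // scale1r scalemxAr.
- exact: blk_part_cochar_unit.
- by move=> a b a0 b0 /=; rewrite lamM // blk_partM //; apply: lam_blk.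
Qed.

End BlockCocharacters.

Section ProductSubgroup.
Variables (K : mxset k N) (Ks : 'I_n -> mxset k N).
Hypotheses (K_sub : subgroup K) (Ks_sub : forall i, subgroup (Ks i))
  (Ks_blocks : forall i g, Ks i g ->
     (Vs i *m g <= Vs i)%MS /\ (forall j, j != i -> Vs j *m g = Vs j))
  (K_prod : forall g, K g <-> exists f : 'I_n -> 'M[k]_N,
     (forall i, Ks i (f i)) /\ g = \big[mulmx/1%:M]_(i < n) f i).

Lemma Ks_blkdiag i g : Ks i g -> blkdiag g.
Proof.
case/Ks_blocks => Vig Vjg; apply: blkdiag_of_stable => j.
by have [->//|ji] := eqVneq j i; rewrite Vjg.
Qed.

Lemma Ks_fixed i g j : Ks i g -> j != i -> B j *m g = B j.
Proof. by case/Ks_blocks => _ Vjg ji; apply/blk_proj_fixed/Vjg. Qed.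

Lemma Ks_blk_part i g : Ks i g -> blk_part i g = g.
Proof. by move=> Kig; apply: blk_part_id => j; apply: Ks_fixed. Qed.

Lemma blk_proj_Ks_prod (f : 'I_n -> 'M[k]_N) j : (forall i, Ks i (f i)) ->
  B j *m \big[mulmx/1%:M]_(i < n) f i = B j *m f j.
Proof.
move=> Kf; apply: blk_proj_prod => [l|l lj]; first exact: Ks_blkdiag (Kf l).
by apply: Ks_fixed (Kf l) _; rewrite eq_sym.
Qed.

Lemma K_blkdiag g : K g -> blkdiag g.
Proof.
case/K_prod => f [Kf ->]; apply: (big_ind blkdiag) => [j||l _].
- by rewrite mulmx1 mul1mx.
- exact: blkdiagM.
- exact: Ks_blkdiag (Kf l).
Qed.

Lemma K_blk_part i g : K g -> Ks i (blk_part i g).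
Proof.
case/K_prod => f [Kf ->]; rewrite /blk_part blk_proj_Ks_prod //.
by have := Ks_blk_part (Kf i); rewrite /blk_part => ->.
Qed.

Lemma K_of_blocks (f : 'I_n -> 'M[k]_N) : (forall i, Ks i (f i)) -> K (\sum_i B i *m f i).
Proof.
move=> Kf; apply/K_prod; exists f; split => //.
by rewrite [RHS]blk_proj_decomp; apply: eq_bigr => i _; rewrite blk_proj_Ks_prod.
Qed.

Lemma blk_part_of_blocks (f : 'I_n -> 'M[k]_N) i : (forall i, Ks i (f i)) ->
  blk_part i (\sum_j B j *m f j) = f i.
Proof.
by move=> Kf; rewrite -[RHS](Ks_blk_part (Kf i)) /blk_part blk_proj_of_blocks.
Qed.

Lemma Ks_K i g : Ks i g -> K g.
Proof.
move=> Kig; pose f j := if j == i then g else 1%:M.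
have Kf j : Ks j (f j) by rewrite /f; case: eqP => [->//|_]; case: (Ks_sub j).
have := K_of_blocks Kf; congr K; rewrite [RHS]blk_proj_decomp.
apply: eq_bigr => j _; rewrite /f; case: eqVneq => [->//|ji].
by rewrite mulmx1 (Ks_fixed Kig ji).
Qed.

Lemma cochar_K_unit lam : cocharacter_of K lam -> forall a, a != 0 -> lam a \in unitmx.
Proof. by have [Kunit _ _ _] := K_sub; move=> [_ lamK] a a0; apply/Kunit/lamK. Qed.

Lemma cochar_K_blkdiag lam : cocharacter_of K lam -> forall a, a != 0 -> blkdiag (lam a).
Proof. by move=> [_ lamK] a a0; apply/K_blkdiag/lamK. Qed.

Lemma blk_part_cochar_of lam i : cocharacter_of K lam ->
  cocharacter_of (Ks i) (fun a => blk_part i (lam a)).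
Proof.
move=> lamK; have [lam_cochar lamK'] := lamK; split=> [|a a0].
  exact: blk_part_cochar (cochar_K_unit lamK) (cochar_K_blkdiag lamK) i lam_cochar.
exact/K_blk_part/lamK'.
Qed.

(* Exponents are made uniform by multiplying the numerator of [mus i] by a power of ['X]. *)
Lemma cocharacter_of_blocks (mus : 'I_n -> k -> 'M[k]_N) :
  (forall i, cocharacter_of (Ks i) (mus i)) ->
  cocharacter_of K (fun a => \sum_i B i *m mus i a).
Proof.
move=> musKs; have musK i a : a != 0 -> Ks i (mus i a) by case: (musKs i) => _; apply.
have muK a : a != 0 -> K (\sum_i B i *m mus i a) by move=> a0; apply: K_of_blocks => i; apply: musK.
split=> //; split.
- have /fin_all_exists [eP eP_spec] i : exists eP : nat * 'M[{poly k}]_N,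
      forall a, a != 0 -> mus i a = (a ^+ eP.1)^-1 *: evalmx eP.2 a.
    by case: (musKs i) => [[[e [P musP]] _ _] _]; exists (e, P).
  pose e := (\max_i (eP i).1)%N.
  exists e, (\sum_i 'X^(e - (eP i).1) *: (polyC_mx (B i) *m (eP i).2)) => a a0.
  rewrite evalmx_sum scaler_sumr; apply: eq_bigr => i _.
  rewrite eP_spec // evalmxZ evalmxM evalmx_polyC hornerXn scalerA -scalemxAr.
  rewrite exprB ?unitfE //; last exact: (leq_bigmax (F := fun i => (eP i).1) i).
  by rewrite mulKf // expf_neq0.
- by have [Kunit _ _ _] := K_sub; move=> a a0; apply/Kunit/muK.
- move=> a b a0 b0; rewrite mulmx_suml; apply: eq_bigr => i _.
  case: (musKs i) => [[_ _ musM] _]; have musB := Ks_blkdiag (musK i a a0).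
  by rewrite musM // musB -!mulmxA blk_proj_of_blocks !mulmxA musB.
Qed.

Section RelativeCompleteReducibility.
Variable H : mxset k N.
Hypotheses (H_sub : subgroup H) (H_blocks : forall h, H h -> forall i, (Vs i *m h <= Vs i)%MS)
  (K_closed : zclosed K).

Lemma rel_Gcr_factor : rel_Gcr H K -> forall i, rel_Gcr H (Ks i).
Proof.
move=> HK i lam [lam_cochar lamKi] HPlam.
have lamK : cocharacter_of K lam by split=> // a a0; apply: Ks_K (lamKi a a0).
have [mu [muK Plam_mu HLmu]] := HK lam lamK HPlam.
have lam_Pmu a : a != 0 -> Pl mu (lam a) by move=> a0; apply/Plam_mu/Ll_Pl/Ll_self.
have [u [nu [Pmu_u nuK nuE nu_mu u_comm]]] := levi_conjugate K_sub K_closed lamK muK lam_Pmu.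
have [[nu_cochar nuK'] [mu_cochar _]] := (nuK, muK); have [uu _] := Pmu_u.
have u_blk : blkdiag u.
  move=> j; apply: u_comm => a a0.
    exact: cochar_K_blkdiag lamK a a0 j.
  exact: cochar_K_blkdiag muK a a0 j.
exists nu; split.
- split=> // a a0; have nu_fixed j : j != i -> B j *m nu a = B j.
    move=> ji; rewrite nuE // !mulmxA u_blk -(mulmxA u) (Ks_fixed (lamKi a a0) ji).
    by rewrite -u_blk mulmxK.
  by rewrite -(blk_part_id nu_fixed); apply/K_blk_part/nuK'.
- exact: Pl_conj_cochar (cochar_K_unit lamK) ((Plam_mu u).2 Pmu_u) nuE.
- move=> h /HLmu; apply: (Ll_subset_of_Pl_subset nu_cochar mu_cochar nu_mu) => g.
  by move=> /Plam_mu /(Pl_conj_cochar (cochar_K_unit lamK) ((Plam_mu u).2 Pmu_u) nuE).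
Qed.

Section FactorCocharacters.
Variables (lam : k -> 'M[k]_N) (mus : 'I_n -> k -> 'M[k]_N).
Hypotheses (lamK : cocharacter_of K lam)
  (musKs : forall i, cocharacter_of (Ks i) (mus i))
  (Plam_mus : forall i g, Pl (fun a => blk_part i (lam a)) g <-> Pl (mus i) g)
  (HLmus : forall i h, H h -> Ll (mus i) h).

Local Notation mu := (fun a => \sum_i B i *m mus i a).

Lemma blk_part_mu i a : a != 0 -> blk_part i (mu a) = mus i a.
Proof. by move=> a0; apply: blk_part_of_blocks => j; case: (musKs j) => _; apply. Qed.

Lemma Pl_mu_lam g : blkdiag g -> g \in unitmx -> Pl mu g <-> Pl lam g.
Proof.
have muK := cocharacter_of_blocks musKs.
move=> Bg gu; rewrite (Pl_blk_partsE (cochar_K_unit muK) (cochar_K_blkdiag muK)) //.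
rewrite (Pl_blk_partsE (cochar_K_unit lamK) (cochar_K_blkdiag lamK)) //.
split=> Pg i; first by apply/Plam_mus; apply: Pl_ext (blk_part_mu i) (Pg i).
by apply: Pl_ext ((Plam_mus i g).1 (Pg i)) => a a0; rewrite blk_part_mu.
Qed.

Lemma Ll_blk_part_conj i nu u h : cocharacter_of K nu -> blkdiag u -> Pl lam u ->
  (forall a, a != 0 -> nu a = u *m lam a *m invmx u) ->
  (forall a b, a != 0 -> b != 0 -> nu a *m mu b = mu b *m nu a) ->
  H h -> Ll (fun a => blk_part i (nu a)) h.
Proof.
move=> nuK u_blk Plam_u nuE nu_mu /(HLmus i).
have [lam_unit lam_blk] := (cochar_K_unit lamK, cochar_K_blkdiag lamK).
have [[mui_cochar _] [nu_cochar _]] := (musKs i, nuK); have [uu _] := Plam_u.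
have muK := cocharacter_of_blocks musKs.
have nu_blk := cochar_K_blkdiag nuK.
apply: (Ll_subset_of_Pl_subset (blk_part_cochar (cochar_K_unit nuK) nu_blk i nu_cochar)) => //.
  move=> a b a0 b0; rewrite -(blk_part_mu i b0) !blk_partM ?nu_mu //.
    exact: cochar_K_blkdiag muK b b0 i.
  exact: nu_blk a a0 i.
have Plami_u : Pl (fun a => blk_part i (lam a)) u.
  by apply: (Pl_blk_partsE lam_unit lam_blk u_blk uu).1.
have nuiE a : a != 0 -> blk_part i (nu a) = u *m blk_part i (lam a) *m invmx u.
  by move=> a0; rewrite nuE // blk_part_conjmx.
move=> g /Plam_mus.
exact: (Pl_conj_cochar (blk_part_cochar_unit lam_unit lam_blk i) Plami_u nuiE g).1.
Qed.

End FactorCocharacters.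

Lemma rel_Gcr_of_factors : (forall i, rel_Gcr H (Ks i)) -> rel_Gcr H K.
Proof.
move=> HKs lam lamK HPlam.
have [lam_unit lam_blk] := (cochar_K_unit lamK, cochar_K_blkdiag lamK).
have H_blk h : H h -> blkdiag h by move/H_blocks; apply: blkdiag_of_stable.
have H_unit h : H h -> h \in unitmx by case: H_sub => Hunit _ _ _; apply: Hunit.
have HPlami i h : H h -> Pl (fun a => blk_part i (lam a)) h.
  move=> Hh; have := (Pl_blk_partsE lam_unit lam_blk (H_blk h Hh) (H_unit h Hh)).1.
  by apply; apply: HPlam.
have /fin_all_exists [mus mus_spec] i := HKs i _ (blk_part_cochar_of i lamK) (HPlami i).
have [musKs Plam_mus HLmus] := all_and3 mus_spec.
pose mu a := \sum_i B i *m mus i a.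
have muK : cocharacter_of K mu := cocharacter_of_blocks musKs.
have Pmu_lam := Pl_mu_lam lamK musKs Plam_mus.
have lam_Pmu a : a != 0 -> Pl mu (lam a).
  by move=> a0; apply/(Pmu_lam _ (lam_blk a a0) (lam_unit a a0))/Ll_Pl/Ll_self; case: lamK.
have [u [nu [Pmu_u nuK nuE nu_mu u_comm]]] := levi_conjugate K_sub K_closed lamK muK lam_Pmu.
have [uu _] := Pmu_u.
have u_blk : blkdiag u.
  move=> j; apply: u_comm => a a0; first exact: lam_blk a a0 j.
  exact: cochar_K_blkdiag muK a a0 j.
have Plam_u : Pl lam u by apply/(Pmu_lam _ u_blk uu).
exists nu; split => //; first exact: Pl_conj_cochar lam_unit Plam_u nuE.
move=> h Hh; have nu_blk := cochar_K_blkdiag nuK.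
apply/(Ll_blk_partsE (cochar_K_unit nuK) nu_blk (H_blk h Hh) (H_unit h Hh)) => i.
by have := Ll_blk_part_conj lamK musKs Plam_mus HLmus i nuK u_blk Plam_u nuE nu_mu Hh.
Qed.

End RelativeCompleteReducibility.

End ProductSubgroup.

End DirectSumBlocks.

Theorem corollary4p7 (k : closedFieldType) (N n : nat)
  (Vs : 'I_n -> 'M[k]_N) (H K : mxset k N) (Ks : 'I_n -> mxset k N) :
  (* V = k^N = (+)_i V_i, V_i = row space of Vs i *)
  mxdirect (\sum_(i < n) Vs i) ->
  row_full (\sum_(i < n) Vs i)%MS ->
  (* H is a subgroup of GL(V) preserving each V_i *)
  subgroup H ->
  (forall h, H h -> forall i, (Vs i *m h <= Vs i)%MS) ->
  (* K is reductive *)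
  reductive K ->
  (* K_i <= GL(V_i), embedded in GL(V) acting trivially on V_j, j <> i *)
  (forall i, subgroup (Ks i)) ->
  (forall i g, Ks i g ->
     (Vs i *m g <= Vs i)%MS /\ (forall j, j != i -> Vs j *m g = Vs j)) ->
  (* K = K_1 x ... x K_n *)
  (forall g, K g <-> exists f : 'I_n -> 'M[k]_N,
       (forall i, Ks i (f i)) /\ g = \big[mulmx/1%:M]_(i < n) f i) ->
  rel_Gcr H K <-> (forall i, rel_Gcr H (Ks i)).
Proof.
move=> Vs_direct Vs_full H_sub H_blocks [K_sub K_closed _] Ks_sub Ks_blocks K_prod.
split; first exact: (rel_Gcr_factor Vs_direct Vs_full K_sub Ks_sub Ks_blocks K_prod K_closed).
exact: (rel_Gcr_of_factors Vs_direct Vs_full K_sub Ks_blocks K_prod H_sub H_blocks K_closed).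
Qed.
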